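(* Let $q$ be a prime, $m\geq 3$, and let $D'$ be an abelian group of order $q^{m+1}$. Suppose that: (1) $D'$ contains at least two subgroups of order $q^{m-1}$ and one of them, say $A'$, is cyclic; (2) $A'$ contains a subgroup $A_1'$ of order $q$ such that $D'/A_1'\cong C_q\times C_{q^{m-1}}$. Then $D'$ is isomorphic to $C_q\times C_{q^m}$ or to $C_{q^2}\times C_{q^{m-1}}$. Moreover, if $m\geq 4$, or if $D'$ contains a noncyclic subgroup $W'$ of order $q^2$ such that $|W'\cap A'|=q$ and $D'/W'$ is cyclic, then $D'\cong C_q\times C_{q^m}$.
   Context: $C_n$ denotes the cyclic group of order $n$. *)

From mathcomp Require Import all_boot all_fingroup all_solvable all_algebra.
Set Implicit Arguments. Unset Strict Implicit. Unset Printing Implicit Defensive.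

(* The external direct product C_a x C_b of two cyclic groups, realized as
   Zp a x Zp b inside the product finGroupType 'Z_a * 'Z_b.
   (Only used with a, b >= 2 in the statement, where #|Zp a| = a.) *)
Definition CxC (a b : nat) : {group ('Z_a * 'Z_b)%type} :=
  setX_group (Zp a) (Zp b).

From mathcomp Require Import all_boot all_fingroup all_solvable all_algebra.
From mathcomp Require Import zify.
Set Implicit Arguments.
Unset Strict Implicit.
Unset Printing Implicit Defensive.

(* The exponent of D is q^e with m - 1 <= e <= m + 1, as D contains the cyclic
   A of order q^(m-1); e = m + 1 is impossible since D/A1 is not cyclic.
   If e = m, a cyclic subgroup of maximal order has a complement, of order q.
   If e = m - 1, then D/A1 has the same exponent as D, so some y of order
   q^(m-1) has <y> meeting A1 trivially; as A1 = Ohm_1(A) for the cyclic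
   q-group A, <y> meets A trivially too.  Then q^(2(m-1)) = |A<y>| <= q^(m+1)
   forces m = 3 and D = A x <y> = C_{q^2} x C_{q^2}.  In that group
   Ohm_1 = Mho^1 = Phi has order q^2, so a noncyclic W of order q^2, being
   elementary abelian, is Phi(D), and D/W is elementary abelian of order q^2. *)

Lemma Zp_cyclic n : 1 < n -> cyclic (Zp n).
Proof. by move=> n_gt1; rewrite /Zp n_gt1 Zp_cycle cycle_cyclic. Qed.

Section CyclicProduct.

Local Open Scope group_scope.

Variables a b : nat.
Hypotheses (a_gt1 : 1 < a) (b_gt1 : 1 < b).

Lemma CxC_dprod : exists H K : {group ('Z_a * 'Z_b)%type},
  [/\ H \x K = CxC a b, cyclic H, #|H| = a, cyclic K & #|K| = b].
Proof.
have isoA := isog_setX1 ('Z_b) (Zp_group a).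
have isoB := isog_set1X ('Z_a) (Zp_group b).
exists (setX_group (Zp_group a) 1), (setX_group 1 (Zp_group b)); split.
- exact: setX_dprod.
- by rewrite -(isog_cyclic isoA) Zp_cyclic.
- by rewrite -(card_isog isoA) card_Zp // ltnW.
- by rewrite -(isog_cyclic isoB) Zp_cyclic.
- by rewrite -(card_isog isoB) card_Zp // ltnW.
Qed.

Lemma dprod_isog_CxC (gT : finGroupType) (G H K : {group gT}) :
  H \x K = G -> cyclic H -> cyclic K -> #|H| = a -> #|K| = b ->
  G \isog CxC a b.
Proof.
move=> defG cycH cycK oH oK.
have [H' [K' [defC cycH' oH' cycK' oK']]] := CxC_dprod.
apply: (isog_dprod defG defC); rewrite isog_cyclic_card //.
  by rewrite cycH' oH' oH eqxx.
by rewrite cycK' oK' oK eqxx.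
Qed.

Lemma exponent_CxC : exponent (CxC a b) = lcmn a b.
Proof.
have [H [K [defC cycH oH cycK oK]]] := CxC_dprod.
by rewrite -(dprod_exponent defC) !exponent_cyclic // oH oK.
Qed.

Lemma cyclic_CxC : cyclic (CxC a b) = coprime a b.
Proof.
have [H [K [defC cycH oH cycK oK]]] := CxC_dprod.
by rewrite (cyclic_dprod defC) // oH oK.
Qed.

End CyclicProduct.

Section FiniteGroupFacts.

Local Open Scope group_scope.

Variable gT : finGroupType.
Implicit Types (G H K W : {group gT}) (p : nat).

Lemma exponent_card_cyclic G : nilpotent G -> exponent G = #|G| -> cyclic G.
Proof.
move=> nilG; have [x Gx ->] := exponent_witness nilG => ox.
apply/cyclicP; exists x; apply/eqP.
by rewrite eq_sym eqEcard cycle_subG Gx -orderE ox leqnn.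
Qed.

Lemma p2group_noncyclic_abelem p W :
  prime p -> #|W| = (p ^ 2)%N -> ~~ cyclic W -> p.-abelem W.
Proof.
move=> p_pr oW ncycW; have cWW := card_p2group_abelian p_pr oW.
have [k k_le2 eW] : exists2 k, k <= 2 & exponent W = (p ^ k)%N.
  by apply/dvdn_pfactor; rewrite // -oW exponent_dvdn.
have k_neq2 : k != 2.
  apply: contra ncycW => /eqP k2.
  by apply: exponent_card_cyclic (abelian_nil cWW) _; rewrite eW oW k2.
rewrite abelemE // cWW eW -{2}(expn1 p) dvdn_Pexp2l ?prime_gt1 //; lia.
Qed.

Lemma Ohm1_cyclic_pgroup p G H :
  prime p -> cyclic G -> p.-group G -> H \subset G -> #|H| = p ->
  'Ohm_1(G) = H.
Proof.
move=> p_pr cycG pG sHG oH.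
have ntG : G :!=: 1.
  by rewrite -cardG_gt1 (leq_trans (prime_gt1 p_pr)) // -oH subset_leq_card.
apply/eqP; rewrite (eq_subG_cyclic cycG) ?Ohm_sub //.
by rewrite oH (Ohm1_cyclic_pgroup_prime cycG pG ntG).
Qed.

Lemma coset_order_TI H y :
  y \in 'N(H) -> #[coset H y] = #[y] -> H :&: <[y]> = 1.
Proof.
move=> Ny oy; have := Lagrange (subsetIl <[y]> H).
rewrite indexgI -card_quotient ?cycle_subG // quotient_cycle // -!orderE oy.
move/eqP; rewrite -{2}(mul1n #[y]) eqn_pmul2r ?order_gt0 // setIC => /eqP oI.
by apply/eqP; rewrite trivg_card1 oI.
Qed.

Lemma exponent_quotient_witness G H :
  nilpotent G -> G \subset 'N(H) -> exponent (G / H) = exponent G ->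
  exists y, [/\ y \in G, #[y] = exponent G & H :&: <[y]> = 1].
Proof.
move=> nilG nHG eGH; have [u Qu ou] := exponent_witness (quotient_nil H nilG).
have [y Ny Gy defu] := morphimP Qu; rewrite {u Qu}defu in ou.
have oy : #[coset H y] = #[y].
  by apply/eqP; rewrite eqn_dvd morph_order // -ou eGH dvdn_exponent.
exists y; split=> //; first by rewrite -oy -ou.
exact: coset_order_TI.
Qed.

Lemma abelian_isog_CxC_exponent p k G :
  prime p -> 0 < k -> abelian G ->
  #|G| = (p ^ k.+1)%N -> exponent G = (p ^ k)%N -> G \isog CxC p (p ^ k).
Proof.
move=> p_pr k_gt0 cGG oG eG.
have [x Gx ox] := exponent_witness (abelian_nil cGG).
have [K /complP[tiK defG]] := splitsP (abelian_splits Gx (esym ox) cGG).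
have sKG : K \subset G by rewrite -defG mulG_subr.
have dG : K \x <[x]> = G.
  by rewrite dprodC dprodE // (sub_abelian_cent2 cGG) // cycle_subG.
have ox' : #|<[x]>| = (p ^ k)%N by rewrite -orderE -ox eG.
have oK : #|K| = p.
  have pk_gt0 : 0 < (p ^ k)%N by rewrite expn_gt0 prime_gt0.
  apply/eqP; rewrite -(eqn_pmul2r pk_gt0) [(p * _)%N]mulnC -expnSr -oG.
  by rewrite -(dprod_card dG) ox'.
apply: (dprod_isog_CxC _ _ dG); rewrite ?cycle_cyclic ?prime_cyclic ?oK //.
- exact: prime_gt1.
- by rewrite -(expn0 p) ltn_exp2l ?prime_gt1.
Qed.

Lemma Ohm1_Mho1_cycle p (x : gT) :
  prime p -> #[x] = (p ^ 2)%N -> 'Ohm_1(<[x]>) = 'Mho^1(<[x]>).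
Proof.
move=> p_pr ox; have px : p.-elt x by rewrite /p_elt ox pnatX pnat_id.
by rewrite (Ohm_p_cycle 1 px) (Mho_p_cycle 1 px) ox pfactorK.
Qed.

Lemma dprod_p2_cycles_quotient_noncyclic p G H K W :
  prime p -> H \x K = G -> cyclic H -> cyclic K ->
  #|H| = (p ^ 2)%N -> #|K| = (p ^ 2)%N ->
  W \subset G -> #|W| = (p ^ 2)%N -> ~~ cyclic W -> ~~ cyclic (G / W).
Proof.
move=> p_pr defG cycH cycK oH oK sWG oW ncycW.
have oG : #|G| = (p ^ 4)%N by rewrite -(dprod_card defG) oH oK -expnD.
have pG : p.-group G by rewrite /pgroup oG pnatX pnat_id.
have cGG : abelian G.
  by case/dprodP: defG => _ <- cHK _; rewrite abelianM !cyclic_abelian.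
have [[h defH] [k defK]] := (cyclicP cycH, cyclicP cycK).
have OM : 'Ohm_1(G) = 'Mho^1(G).
  rewrite -(Ohm_dprod 1 defG) -(Mho_dprod 1 defG) defH defK.
  by rewrite !(Ohm1_Mho1_cycle p_pr) // orderE -?defH -?defK.
have oO : #|'Ohm_1(G)| = (p ^ 2)%N.
  apply: (@expIn 2) => //.
  by rewrite expnS expn1 {2}OM mul_card_Ohm_Mho_abelian // oG -expnM.
have defW : W :=: 'Phi(G).
  apply/eqP; rewrite (Phi_Mho pG cGG) -OM eqEcard oW oO leqnn andbT.
  by rewrite -(Ohm1_id (p2group_noncyclic_abelem p_pr oW ncycW)) OhmS.
have oQ : #|G / W| = (p ^ 2)%N.
  rewrite card_quotient ?sub_abelian_norm // -divgS // oG oW.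
  by rewrite (_ : 4 = 2 + 2) // expnD mulnK // expn_gt0 prime_gt0.
rewrite (abelem_cyclic (_ : p.-abelem (G / W))) ?oQ ?pfactorK //.
by rewrite defW; apply: Phi_quotient_abelem.
Qed.

End FiniteGroupFacts.

Section Lemma6p1Hypotheses.

Local Open Scope group_scope.

Variables (gT : finGroupType) (D A A1 : {group gT}) (q n : nat).
Hypotheses (q_pr : prime q) (n_gt1 : 1 < n) (cDD : abelian D).
Hypotheses (oD : #|D| = (q ^ n.+2)%N) (sAD : A \subset D).
Hypotheses (oA : #|A| = (q ^ n)%N) (cycA : cyclic A).
Hypotheses (sA1A : A1 \subset A) (oA1 : #|A1| = q).
Hypothesis isoQ : D / A1 \isog CxC q (q ^ n).

Let q_gt1 : 1 < q := prime_gt1 q_pr.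
Let qn_gt1 : 1 < (q ^ n)%N.
Proof. by rewrite -(expn0 q) ltn_exp2l // ltnW. Qed.

Lemma exponent_quotient_A1 : exponent (D / A1) = (q ^ n)%N.
Proof.
rewrite (exponent_isog isoQ) exponent_CxC //; apply/lcmn_idPr.
by rewrite -{1}(expn1 q) dvdn_exp2l // ltnW.
Qed.

Lemma quotient_A1_noncyclic : ~~ cyclic (D / A1).
Proof.
rewrite (isog_cyclic isoQ) cyclic_CxC // coprime_pexpr ?(ltnW n_gt1) //.
by rewrite /coprime gcdnn gtn_eqF.
Qed.

Lemma exponent_bounds :
  exists2 e, n <= e <= n.+2 & exponent D = (q ^ e)%N.
Proof.
have [e le_e_n2 eD] : exists2 e, e <= n.+2 & exponent D = (q ^ e)%N.
  by apply/dvdn_pfactor; rewrite // -oD exponent_dvdn.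
exists e => //; rewrite le_e_n2 andbT -(dvdn_Pexp2l _ _ q_gt1) -eD -oA.
by rewrite -exponent_cyclic // exponentS.
Qed.

Lemma exponent_neq_card : exponent D != #|D|.
Proof.
apply: contra quotient_A1_noncyclic => /eqP eD.
exact/quotient_cyclic/exponent_card_cyclic/eD/abelian_nil.
Qed.

Lemma exponent_min_dprod :
  exponent D = (q ^ n)%N ->
  n = 2 /\ exists y, A \x <[y]> = D /\ #[y] = (q ^ n)%N.
Proof.
move=> eD; have nA1D := sub_abelian_norm cDD (subset_trans sA1A sAD).
have [y [Dy oy tiA1y]] := exponent_quotient_witness (abelian_nil cDD) nA1D
  (etrans exponent_quotient_A1 (esym eD)).
rewrite eD in oy.
have pA : q.-group A by rewrite /pgroup oA pnatX pnat_id.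
have tiAy : A :&: <[y]> = 1.
  rewrite setIC; apply: TI_Ohm1.
  by rewrite (Ohm1_cyclic_pgroup q_pr cycA pA sA1A oA1) setIC.
have defAy : A \x <[y]> = A * <[y]>.
  by rewrite dprodE // (sub_abelian_cent2 cDD) // cycle_subG.
have sAyD : A * <[y]> \subset D by rewrite mul_subG // cycle_subG.
have oAy : #|A * <[y]>| = (q ^ (n + n))%N.
  by rewrite TI_cardMg // oA -orderE oy expnD.
have n2 : n = 2.
  have := subset_leq_card sAyD; rewrite oAy oD leq_exp2l //; lia.
split=> //; exists y; split=> //; rewrite defAy.
by apply/eqP; rewrite eqEcard sAyD oAy oD n2 leq_exp2l.
Qed.

End Lemma6p1Hypotheses.

Theorem lemma6p1 (gT : finGroupType) (D A A1 : {group gT}) (q m : nat) :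
  prime q -> 3 <= m ->
  abelian D -> #|D| = q ^ m.+1 ->
  (* (1) at least two subgroups of order q^(m-1), one of which is A, cyclic *)
  A \subset D -> #|A| = q ^ m.-1 -> cyclic A ->
  (exists B : {group gT}, [/\ B \subset D, #|B| = q ^ m.-1 & B != A]) ->
  (* (2) A1 <= A of order q with D/A1 isomorphic to C_q x C_{q^(m-1)} *)
  A1 \subset A -> #|A1| = q ->
  (D / A1)%g \isog CxC q (q ^ m.-1) ->
  (D \isog CxC q (q ^ m) \/ D \isog CxC (q ^ 2) (q ^ m.-1)) /\
  ((4 <= m \/
    exists W : {group gT},
      [/\ W \subset D, #|W| = q ^ 2, ~~ cyclic W,
          #|W :&: A| = q & cyclic (D / W)%g]) ->
   D \isog CxC q (q ^ m)).
Proof.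
move=> q_pr m_ge3 cDD oD sAD oA cycA _ sA1A oA1 isoQ.
case: m m_ge3 oD oA isoQ => [|n] // n_gt1 oD oA isoQ.
have [e /andP[le_n_e le_e_n2] eD] := exponent_bounds q_pr oD sAD oA cycA.
have e_cases : e = n \/ e = n.+1 \/ e = n.+2 by lia.
case: e_cases eD => [-> | [-> | ->]] eD.
- have [n2 [y [defD oy]]] :=
    exponent_min_dprod q_pr n_gt1 cDD oD sAD oA cycA sA1A oA1 isoQ eD.
  subst n; have oy' : #|<[y]>%g| = q ^ 2 by rewrite -orderE.
  have q2_gt1 : 1 < q ^ 2 by rewrite -(expn0 q) ltn_exp2l ?prime_gt1.
  split.
    by right; apply: dprod_isog_CxC defD _ _ oA oy'; rewrite ?cycle_cyclic.
  case=> [// | [W [sWD oW ncycW _ cycDW]]].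
  by case/negP: (dprod_p2_cycles_quotient_noncyclic q_pr defD cycA
    (cycle_cyclic y) oA oy' sWD oW ncycW).
- have isoD := abelian_isog_CxC_exponent q_pr (ltn0Sn n) cDD oD eD.
  by split; first left.
- by case/negP: (exponent_neq_card q_pr n_gt1 cDD isoQ); rewrite eD oD.
Qed.
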